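(* Let $X$ be a topological vector space over $\mathbb{K}$, let $M\subset X$, and let $\alpha\ge\aleph_0$ be a cardinal with $w(X)\le\alpha$. Then $M$ is $\alpha$-dense-lineable if and only if $M$ is $\alpha$-infinitely $\alpha$-dense-lineable.
   Context: The weight $w(X)$ is the smallest cardinality of a base for the topology of $X$. $M$ is $\beta$-dense-lineable if there is a dense linear subspace $Y$ of $X$ with $\dim(Y)=\beta$ and $Y\subset M\cup\{0\}$. For cardinals $\alpha\ge\aleph_0$ and $\beta$, $M$ is $\alpha$-infinitely $\beta$-dense-lineable if there is a family $\{Y_\kappa\}_{\kappa<\alpha}$ of dense linear subspaces of $X$, each of dimension $\beta$, with $Y_\kappa\subset M\cup\{0\}$ for each $\kappa<\alpha$ and $Y_{\kappa_1}\cap Y_{\kappa_2}=\{0\}$ for $\kappa_1\neq\kappa_2$. *)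

From HB Require Import structures.
From mathcomp Require Import all_boot all_order all_algebra.
From mathcomp Require Import all_classical all_reals all_analysis.
Set Implicit Arguments. Unset Strict Implicit. Unset Printing Implicit Defensive.
Import Order.TTheory GRing.Theory Num.Theory.
Local Open Scope classical_set_scope.
Local Open Scope ring_scope.

(* Cardinals are represented by index types: a cardinal kappa is the
   cardinality of a type A. *)

Section Lineability.
Variables (K : numFieldType) (X : topologicalLmodType K).

Definition lin_subspace (Y : set X) : Prop :=
  Y 0 /\ (forall x y, Y x -> Y y -> Y (x + y)) /\
  (forall (a : K) x, Y x -> Y (a *: x)).

Definition lin_indep (B : Type) (b : B -> X) : Prop :=
  forall (n : nat) (f : 'I_n -> B) (c : 'I_n -> K), injective f ->
    \sum_(i < n) c i *: b (f i) = 0 -> forall i, c i = 0.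

Definition lin_span (B : Type) (b : B -> X) : set X :=
  [set x | exists (n : nat) (f : 'I_n -> B) (c : 'I_n -> K),
             x = \sum_(i < n) c i *: b (f i)].

Definition has_dim (Y : set X) (B : Type) : Prop :=
  exists b : B -> X, lin_indep b /\ lin_span b = Y.

(* w(X) <= |A| : X has a base of its topology of cardinality <= |A|,
   i.e. a base indexed (possibly with repetitions) by A *)
Definition weight_le (A : Type) : Prop :=
  exists Bs : A -> set X, (forall a, open (Bs a)) /\
    (forall (U : set X) (x : X), open U -> U x ->
       exists a, Bs a x /\ Bs a `<=` U).

Definition dense_lineable (B : Type) (M : set X) : Prop :=
  exists Y : set X, lin_subspace Y /\ dense Y /\ has_dim Y B /\
    Y `<=` M `|` [set 0].

Definition inf_dense_lineable (A B : Type) (M : set X) : Prop :=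
  exists Y : A -> set X,
    (forall k, lin_subspace (Y k) /\ dense (Y k) /\ has_dim (Y k) B /\
               Y k `<=` M `|` [set 0]) /\
    (forall k1 k2, k1 <> k2 -> Y k1 `&` Y k2 = [set 0]).

End Lineability.

Definition infinite_card (A : Type) : Prop :=
  exists f : nat -> A, injective f.

From HB Require Import structures.
From mathcomp Require Import all_boot all_order all_algebra.
From mathcomp Require Import all_classical all_reals all_analysis.
Set Implicit Arguments. Unset Strict Implicit. Unset Printing Implicit Defensive.
Import Order.TTheory GRing.Theory Num.Theory.
Local Open Scope classical_set_scope.

(* Let Y ⊆ M ∪ {0} be a dense subspace with Hamel basis (b a)_(a : A).  As A
   is infinite there is an injection A * A -> A (Hessenberg's theorem: for a
   maximal partial injection D * D -> D given by Zorn's lemma, D cannot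
   inject into A \ D, as the pairing could then be extended to D ∪ f(D); so
   A \ D injects into D, and then A * A injects into D).  For every k : A and
   every code j of a pair (a, m) of a basis index and a basic open set, take
   the vector b a + t *: b (psi (k, j)), where psi is injective with values of
   strictly higher "level" than a, and t != 0 is so small that the vector
   stays in the m-th basic open set whenever b a does.  For fixed k these
   vectors approximate every b a, so their span is dense; the levels make the
   whole family triangular with respect to b, hence linearly independent, so
   the spans for distinct k meet only in 0. *)

Definition injective_graph U V (G : set (U * V)) :=
  forall p q, G p -> G q -> (p.1 = q.1 <-> p.2 = q.2).

Lemma injective_graph_bigcup U V (F : set (set (U * V))) :
  (forall G, F G -> injective_graph G) -> total_on F subset ->
  injective_graph (\bigcup_(G in F) G).
Proof.
move=> F_inj F_total p q [G FG Gp] [G' FG' G'q].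
have [GG'|G'G] := F_total _ _ FG FG'.
- exact: F_inj G' FG' p q (GG' _ Gp) G'q.
- exact: F_inj G FG p q Gp (G'G _ G'q).
Qed.

Lemma injective_graph_setU U V (G G' : set (U * V)) :
  injective_graph G -> injective_graph G' ->
  (forall p q, G p -> G' q -> p.1 <> q.1 /\ p.2 <> q.2) ->
  injective_graph (G `|` G').
Proof.
move=> G_inj G'_inj GG' p q [Gp|G'p] [Gq|G'q]; [exact: G_inj|..|exact: G'_inj].
- by have [? ?] := GG' _ _ Gp G'q.
- by have [? ?] := GG' _ _ Gq G'p; split=> /esym.
Qed.

Lemma graph_fun U V (v0 : V) (S : set U) (G : set (U * V)) :
  (forall x, S x -> exists y, G (x, y)) ->
  exists f : U -> V, forall x, S x -> G (x, f x).
Proof.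
move=> S_dom; suff /choice[f fG] : forall x, exists y, S x -> G (x, y).
  by exists f.
move=> x; have [/S_dom[y Gxy]|nSx] := pselect (S x); first by exists y.
by exists v0.
Qed.

Lemma inj_cancel U V (u0 : U) (f : U -> V) : injective f -> exists g, cancel f g.
Proof.
move=> f_inj; exists ('pinv_(fun=> u0) setT f) => u.
by apply: (pinvKV _ (in2W f_inj)); rewrite in_setT.
Qed.

Lemma set_inj_comparable U V (u0 : U) (v0 : V) (S : set U) (S' : set V) :
  (exists2 f : U -> V, set_fun S S' f & set_inj S f) \/
  (exists2 g : V -> U, set_fun S' S g & set_inj S' g).
Proof.
pose P (G : set (U * V)) := G `<=` S `*` S' /\ injective_graph G.
have [|G [[GS G_inj] G_max]] := @Zorn_bigcup _ P.
  move=> F FP F_total; split; first by apply: bigcup_sub => G /FP[].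
  by apply: injective_graph_bigcup => // G /FP[].
have [S_dom|/existsNP[x /not_implyP[Sx /forallNP x_free]]] :=
  pselect (forall x, S x -> exists y, G (x, y)).
  left; have [f fG] := graph_fun v0 S_dom; exists f => [x /fG /GS[]//|].
  move=> x x' /set_mem/fG Gx /set_mem/fG Gx' fxx'.
  exact/(G_inj _ _ Gx Gx').2.
have [S'_dom|/existsNP[y /not_implyP[S'y /forallNP y_free]]] :=
  pselect (forall y, S' y -> exists x, G (x, y)).
  right; have [g gG] := graph_fun u0 (G := [set q | G (q.2, q.1)]) S'_dom.
  exists g => [y /gG /GS[]//|].
  move=> y y' /set_mem/gG Gy /set_mem/gG Gy' gyy'.
  exact/(G_inj _ _ Gy Gy').1.
have [] := G_max (G `|` [set (x, y)]).
  by split=> [q Gq|/(_ (x, y) (or_intror erefl))]; [left|exact: x_free].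
split=> [q [/GS//|->//]|].
apply: injective_graph_setU => // [_ _ -> ->|[a b] _ Gab ->]; first by [].
split=> /= [ax|yb]; first by apply: (x_free b); rewrite -ax.
by apply: (y_free a); rewrite -yb.
Qed.

Lemma square_inj_setU T (D A : set T) (pf : T * T -> T) (d0 d1 : T)
    (v : T -> T) :
  set_fun (D `*` D) D pf -> set_inj (D `*` D) pf -> D d0 -> D d1 -> d0 <> d1 ->
  set_fun A D v -> set_inj A v ->
  exists2 h : T * T -> T,
    set_fun ((D `|` A) `*` (D `|` A)) D h & set_inj ((D `|` A) `*` (D `|` A)) h.
Proof.
move=> pfD pf_inj Dd0 Dd1 d01 vD v_inj.
pose e x := if pselect (D x) then (x, d0) else (v x, d1).
have eD x : (D `|` A) x -> (D `*` D) (e x).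
  by rewrite /e; case: pselect => [Dx _|nDx [//|/vD]]; split.
have e_inj : set_inj (D `|` A) e.
  move=> x y /set_mem xDA /set_mem yDA; rewrite /e.
  case: pselect => Dx; case: pselect => Dy /pair_equal_spec[exy d_eq] //.
  - by case: (d01 (esym d_eq)).
  by apply: v_inj => //; apply/mem_set; [case: xDA|case: yDA].
pose w x := pf (e x).
have wD x : (D `|` A) x -> D (w x) by move=> /eD; exact: pfD.
have w_inj : set_inj (D `|` A) w.
  have eDD z : z \in D `|` A -> e z \in D `*` D by move=> /set_mem/eD/mem_set.
  move=> x y xDA yDA /(pf_inj _ _ (eDD _ xDA) (eDD _ yDA)).
  exact: e_inj.
exists (fun p => pf (w p.1, w p.2)) => [[x y] [/wD Dx /wD Dy]|].
  by apply: pfD; split.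
move=> [x y] [x' y'] /set_mem[/= xDA yDA] /set_mem[/= x'DA y'DA] /= hxy.
have /pair_equal_spec[wxx' wyy'] : (w x, w y) = (w x', w y').
  by apply: pf_inj hxy; apply/mem_set; split; exact: wD.
rewrite (w_inj _ _ (mem_set xDA) (mem_set x'DA) wxx').
by rewrite (w_inj _ _ (mem_set yDA) (mem_set y'DA) wyy').
Qed.

Section Hessenberg.
Variables (T : Type) (i : nat -> T).
Hypothesis i_inj : injective i.

Definition pairing_dom (G : set (T * T * T)) : set T :=
  [set x | exists z, G (x, x, z)].

(* G is the graph of an injection from D * D into D, where D := pairing_dom G
   contains the range of i. *)
Definition pairing (G : set (T * T * T)) :=
  [/\ injective_graph G,
      forall x y z, G (x, y, z) ->
        [/\ pairing_dom G x, pairing_dom G y & pairing_dom G z],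
      forall x y, pairing_dom G x -> pairing_dom G y -> exists z, G (x, y, z)
    & range i `<=` pairing_dom G].

Lemma pairing_dom_sub G G' : G `<=` G' -> pairing_dom G `<=` pairing_dom G'.
Proof. by move=> GG' x [z Gz]; exists z; exact: GG'. Qed.

Lemma pairing_bigcup (F : set (set (T * T * T))) :
  F `<=` [set G | G = set0 \/ pairing G] -> total_on F subset ->
  \bigcup_(G in F) G = set0 \/ pairing (\bigcup_(G in F) G).
Proof.
move=> FP F_total; set U := \bigcup_(G in F) G.
have F_pairing G q : F G -> G q -> pairing G by move=> /FP[->|//].
have U_dom G x : F G -> pairing_dom G x -> pairing_dom U x.
  by move=> FG; apply: pairing_dom_sub => q Gq; exists G.
have [->|/set0P[[[x0 y0] z0] [G0 FG0 G0xyz]]] := eqVneq U set0; first by left.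
right; split.
- by apply: injective_graph_bigcup => // G /FP[->|[]//] p q [].
- move=> x y z [G FG Gxyz]; have [_ G_cl _ _] := F_pairing G _ FG Gxyz.
  by have [Dx Dy Dz] := G_cl _ _ _ Gxyz; split; exact: U_dom FG _.
- move=> x y [zx [G1 FG1 G1x]] [zy [G2 FG2 G2y]].
  have [G [FG Gx Gy]] : exists G, [/\ F G, G (x, x, zx) & G (y, y, zy)].
    by have [G12|G21] := F_total _ _ FG1 FG2; [exists G2|exists G1]; split; auto.
  have [_ _ G_tot _] := F_pairing G _ FG Gx.
  by have [z Gz] := G_tot x y (ex_intro _ _ Gx) (ex_intro _ _ Gy); exists z, G.
- have [_ _ _ G0i] := F_pairing G0 _ FG0 G0xyz.
  by move=> t /G0i; exact: U_dom FG0.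
Qed.

Lemma pairing_base :
  pairing (range (fun mn : nat * nat => (i mn.1, i mn.2, i (pickle mn)))).
Proof.
set G := range _.
have domG : pairing_dom G = range i.
  apply/seteqP; split=> [x [z [[m n] _ [<- _ _]]]|_ [n _ <-]]; first by exists m.
  by exists (i (pickle (n, n))), (n, n).
rewrite /pairing domG; split=> //.
- move=> _ _ [[m n] _ <-] [[m' n'] _ <-] /=.
  split=> [[/i_inj-> /i_inj->]//|/i_inj/(pcan_inj pickleK)[-> ->]//].
- by move=> x y z [[m n] _ [<- <- <-]]; split; eexists.
- by move=> _ _ [m _ <-] [n _ <-]; exists (i (pickle (m, n))), (m, n).
Qed.

Lemma pairing_fun G : pairing G ->
  exists2 pf : T * T -> T,
    set_fun (pairing_dom G `*` pairing_dom G) (pairing_dom G) pf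
    & set_inj (pairing_dom G `*` pairing_dom G) pf.
Proof.
case=> G_inj G_cl G_tot _.
have [pf pfG] : exists pf : T * T -> T,
    forall p, (pairing_dom G `*` pairing_dom G) p -> G (p, pf p).
  by apply: (graph_fun (i 0%N)) => -[x y] [Dx Dy]; exact: G_tot.
exists pf => [[x y] /pfG/G_cl[]//|p q /set_mem/pfG Gp /set_mem/pfG Gq].
exact: (G_inj _ _ Gp Gq).2.
Qed.

Lemma pairing_square_inj G (A : set T) (v : T -> T) :
  pairing G -> set_fun A (pairing_dom G) v -> set_inj A v ->
  exists2 h : T * T -> T,
    set_fun ((pairing_dom G `|` A) `*` (pairing_dom G `|` A)) (pairing_dom G) h
    & set_inj ((pairing_dom G `|` A) `*` (pairing_dom G `|` A)) h.
Proof.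
move=> G_pairing vD v_inj; have [pf pfD pf_inj] := pairing_fun G_pairing.
have Di n : pairing_dom G (i n) by case: G_pairing => _ _ _; apply; exists n.
by apply: square_inj_setU pfD pf_inj (Di 0%N) (Di 1%N) _ vD v_inj => /i_inj.
Qed.

Lemma pairing_setU G (C : set T) (g : T * T -> T) :
  pairing G -> C !=set0 -> (forall c, C c -> ~ pairing_dom G c) ->
  set_fun ((pairing_dom G `|` C) `*` (pairing_dom G `|` C)) C g ->
  set_inj ((pairing_dom G `|` C) `*` (pairing_dom G `|` C)) g ->
  exists2 G', G `<` G' & pairing G'.
Proof.
move=> [G_inj G_cl G_tot Gi] [c Cc] CD gC g_inj.
set D := pairing_dom G; set E := (D `|` C) `*` (D `|` C).
pose N := [set q | (E `\` D `*` D) q.1 /\ q.2 = g q.1].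
have N_C x : C x -> N (x, x, g (x, x)).
  by move=> Cx; split=> //; split=> [|[/CD//]]; split; right.
have domGN : pairing_dom (G `|` N) = D `|` C.
  apply/seteqP; split=> [x [z [Gxz|[[[DCx _] _] _]]]|x [[z Gxz]|Cx]].
  - by left; exists z.
  - exact: DCx.
  - by exists z; left.
  - by exists (g (x, x)); right; exact: N_C.
have GD x y z : G (x, y, z) -> [/\ D x, D y & D z] := G_cl x y z.
exists (G `|` N).
  split=> [q Gq|/(_ _ (or_intror (N_C c Cc)))/GD[/CD//]]; first by left.
split; rewrite ?domGN.
- apply: injective_graph_setU => // [[p z] [p' z'] [Ep ->] [Ep' ->] /=|].
    by split=> [->//|/g_inj]; apply; apply/mem_set; [case: Ep|case: Ep'].
  move=> [[x y] z] [p z'] /GD[Dx Dy Dz] [[Ep nDp] /= ->].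
  split=> [xyp|zgp]; first by apply: nDp; rewrite -xyp.
  by apply: (CD (g p)); [apply: gC|rewrite -zgp].
- move=> x y z [/GD[Dx Dy Dz]|[[[DCx DCy] _] /= ->]]; first by split; left.
  by split=> //; right; apply: gC.
- move=> x y DCx DCy; have [[Dx Dy]|nDxy] := pselect (D x /\ D y).
    by have [z Gz] := G_tot x y Dx Dy; exists z; left.
  by exists (g (x, y)); right.
- by move=> t /Gi; left.
Qed.

Lemma pairing_extend G f0 :
  pairing G -> set_fun (pairing_dom G) (~` pairing_dom G) f0 ->
  set_inj (pairing_dom G) f0 -> exists2 G', G `<` G' & pairing G'.
Proof.
move=> G_pairing f0D f0_inj; set D := pairing_dom G.
have := injpinv_bij (fun=> i 0%N) f0_inj; rewrite /set_bij => -[f0VD f0V_inj _].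
have [h hD h_inj] := pairing_square_inj G_pairing f0VD f0V_inj.
apply: (pairing_setU (C := f0 @` D) (g := f0 \o h) G_pairing).
- have [_ _ _ Gi] := G_pairing.
  by exists (f0 (i 0%N)); exists (i 0%N) => //; apply: Gi; exists 0%N.
- by move=> _ [x Dx <-]; apply: f0D.
- by move=> p /hD Dhp; exists (h p).
- move=> p q pE qE fhpq.
  have hE r : r \in (D `|` f0 @` D) `*` (D `|` f0 @` D) -> h r \in D.
    by move=> /set_mem/hD/mem_set.
  exact: h_inj pE qE (f0_inj _ _ (hE _ pE) (hE _ qE) fhpq).
Qed.

Theorem infinite_square_inj : exists h : T * T -> T, injective h.
Proof.
have [G [G_pairing G_max]] := Zorn_bigcup pairing_bigcup.
have {G_pairing}G_pairing : pairing G.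
  case: G_pairing => // G0.
  case: (G_max _ _ (or_intror pairing_base)); rewrite G0.
  by split=> // /(_ (i 0%N, i 0%N, i (pickle (0, 0)%N))); apply; exists (0, 0)%N.
set D := pairing_dom G.
have [[f0 f0D f0_inj]|[f1 f1D f1_inj]] :=
  set_inj_comparable (i 0%N) (i 0%N) D (~` D).
  have [G' GG' G'_pairing] := pairing_extend G_pairing f0D f0_inj.
  by case: (G_max _ GG'); right.
have [h _ h_inj] := pairing_square_inj G_pairing f1D f1_inj.
by exists h => p q; apply: h_inj; apply/mem_set; rewrite setUv.
Qed.

End Hessenberg.

Local Open Scope ring_scope.

Section LinearCombinations.
Variables (K : numFieldType) (X : topologicalLmodType K).
Implicit Types (B : Type) (I : finType).

Lemma lin_spanP B (b : B -> X) x :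
  lin_span b x <->
  exists (I : finType) (f : I -> B) (c : I -> K), x = \sum_i c i *: b (f i).
Proof.
split=> [[n [f [c ->]]]|[I [f [c ->]]]]; first by exists 'I_n, f, c.
exists #|I|, (f \o enum_val), (c \o enum_val).
rewrite -(big_enum_val (fun i => c i *: b (f i))).
by apply: eq_bigl => i; rewrite inE.
Qed.

Lemma lin_span_subspace B (b : B -> X) : lin_subspace (lin_span b).
Proof.
split; [|split].
- by apply/lin_spanP; exists void, (@of_void B), (fun=> 0); rewrite big_pred0.
- move=> _ _ /lin_spanP[I [f [c ->]]] /lin_spanP[J [g [d ->]]]; apply/lin_spanP.
  exists (I + J)%type, (fun k => match k with inl i => f i | inr j => g j end).
  exists (fun k => match k with inl i => c i | inr j => d j end).
  by rewrite big_sumType.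
- move=> a _ /lin_spanP[I [f [c ->]]]; apply/lin_spanP.
  exists I, f, (fun i => a * c i).
  by rewrite scaler_sumr; apply: eq_bigr => i _; rewrite scalerA.
Qed.

Lemma lin_span_mem B (b : B -> X) j : lin_span b (b j).
Proof. by exists 1%N, (fun=> j), (fun=> 1); rewrite big_ord1 scale1r. Qed.

Lemma lin_span_sub B (b : B -> X) (Y : set X) :
  lin_subspace Y -> (forall j, Y (b j)) -> lin_span b `<=` Y.
Proof.
move=> [Y0 [YD YZ]] Yb _ [n [f [c ->]]].
by apply: (big_ind Y) => // i _; exact: YZ.
Qed.

Definition coef_at B I (f : I -> B) (c : I -> K) (a : B) : K :=
  \sum_(i | `[< f i = a >]) c i.

Lemma partition_big_image B I (V : nmodType) (f : I -> B) (P : pred I)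
    (F : I -> V) :
  \sum_(i | P i) F i =
  \sum_(a <- undup [seq f i : {classic B} | i <- enum I])
    \sum_(i | P i && `[< f i = a >]) F i.
Proof.
rewrite (exchange_big_dep xpredT) //= big_mkcond [RHS]big_mkcond.
apply: eq_bigr => i _.
case: (P i); last by rewrite big_pred0.
rewrite (eq_bigl (pred1 (f i : {classic B}))) => [|a]; last by apply/asboolP/eqP.
rewrite -big_filter filter_pred1_uniq ?big_seq1 ?undup_uniq //.
by rewrite mem_undup; apply: map_f; rewrite mem_enum.
Qed.

Lemma sumZ_coef_at B I (V : lmodType K) (f : I -> B) (c : I -> K) (v : B -> V) :
  \sum_i c i *: v (f i) =
  \sum_(a <- undup [seq f i : {classic B} | i <- enum I]) coef_at f c a *: v a.
Proof.
rewrite (partition_big_image f); apply: eq_bigr => a _.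
by rewrite /coef_at scaler_suml; apply: eq_bigr => i /asboolP ->.
Qed.

Lemma coef_at_eq0_sumZ B I (V : lmodType K) (f : I -> B) (c : I -> K)
    (v : B -> V) :
  (forall a, coef_at f c a = 0) -> \sum_i c i *: v (f i) = 0.
Proof. by move=> c0; rewrite sumZ_coef_at big1 // => a _; rewrite c0 scale0r. Qed.

Lemma coef_at_eq0_sum B I (f : I -> B) (c : I -> K) (P : pred B) :
  (forall i, P (f i) -> coef_at f c (f i) = 0) -> \sum_(i | P (f i)) c i = 0.
Proof.
move=> c0; rewrite (partition_big_image f); apply: big1_seq => a /andP[_].
rewrite mem_undup => /mapP[i0 _ ->].
have [Pi0|nPi0] := boolP (P (f i0)); last first.
  rewrite big_pred0 // => i; apply/negbTE/andP => -[Pi /asboolP fi].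
  by rewrite -fi Pi in nPi0.
transitivity (coef_at f c (f i0)); last exact: c0.
apply: eq_bigl => i.
by case: (asboolP (f i = f i0)) => [->|_]; rewrite ?Pi0 ?andbF.
Qed.

Lemma lin_indepP B (b : B -> X) :
  lin_indep b <->
  forall I (f : I -> B) (c : I -> K),
    \sum_i c i *: b (f i) = 0 -> forall a, coef_at f c a = 0.
Proof.
split=> [b_indep I f c | b_free n f c f_inj /b_free c0 i]; last first.
  rewrite -(c0 (f i)) /coef_at (big_pred1 i) // => j.
  by apply/asboolP/eqP => [/f_inj|->].
rewrite sumZ_coef_at; set S := undup _ => S0 a.
have S_inj : injective (tnth (in_tuple S)).
  by apply/tuple_uniqP; exact: undup_uniq.
move: S0; rewrite big_tnth => /(b_indep _ _ _ S_inj) S0.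
have [aS|aS] := boolP ((a : {classic B}) \in S).
  by have /tnthP[k ->] : (a : {classic B}) \in in_tuple S by []; exact: S0.
rewrite /coef_at big_pred0 // => i; apply/asboolP => fia; move: aS.
by rewrite -fia mem_undup map_f // mem_enum.
Qed.

Lemma lin_indep_comp B J (b : B -> X) (e : J -> B) :
  lin_indep b -> injective e -> lin_indep (b \o e).
Proof.
by move=> b_indep e_inj n f c f_inj; apply: b_indep => // i j /e_inj/f_inj.
Qed.

Lemma lin_indep_perturbed B J (b : B -> X) (src psi : J -> B) (t : J -> K)
    (rk : B -> nat) :
  lin_indep b -> injective psi -> (forall j, t j != 0) ->
  (forall j, rk (src j) < rk (psi j))%N ->
  lin_indep (fun j => b (src j) + t j *: b (psi j)).
Proof.
move=> /lin_indepP b_free psi_inj t_neq0 rk_lt.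
apply/lin_indepP => I g c sum0 j; apply/eqP/negPn/negP => cj.
have [i0 gi0] : exists i0, g i0 = j.
  apply/not_existsP => gj; move/eqP: cj; apply.
  by rewrite /coef_at big_pred0 // => i; apply/asboolP/gj.
(* Among the indices with a nonzero coefficient, g i1 maximizes rk (psi _),
   so b (psi (g i1)) only gets contributions from the vector of index g i1:
   psi is injective, and an index j with src j = psi (g i1) has an even
   larger rk (psi j). *)
case: (@arg_maxnP _ i0 (fun i => coef_at g c (g i) != 0)
    (fun i => rk (psi (g i)))); first by rewrite gi0.
move=> i1 ci1 i1_max; set a := psi (g i1).
pose f k := match k with inl i => src (g i) | inr i => psi (g i) end.
pose d k := match k with inl i => c i | inr i => c i * t (g i) end.
have : coef_at f d a = 0.
  apply: b_free; rewrite big_sumType /= -big_split /= -[RHS]sum0.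
  by apply: eq_bigr => i _; rewrite scalerDr scalerA.
rewrite /coef_at big_sumType /=.
rewrite (@coef_at_eq0_sum _ _ g c (fun j => `[< src j = a >])) ?add0r
    => [|i /asboolP src_a]; last first.
  apply/eqP/negPn/negP => ci; have := i1_max i ci; rewrite /= leqNgt.
  by rewrite -/a -src_a rk_lt.
rewrite (eq_bigl (fun i => `[< g i = g i1 >])) => [|i]; last first.
  by apply/asboolP/asboolP => [/psi_inj|->].
rewrite (eq_bigr (fun i => c i * t (g i1))) => [|i /asboolP -> //].
by rewrite -mulr_suml; apply/eqP; rewrite mulf_neq0.
Qed.

Lemma lin_span_disjoint B J (x : B * J -> X) k1 k2 :
  lin_indep x -> k1 <> k2 ->
  lin_span (fun j => x (k1, j)) `&` lin_span (fun j => x (k2, j)) = [set 0].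
Proof.
move=> /lin_indepP x_free k12; apply/seteqP; split=> [z|_ ->]; last first.
  by split; exact: (lin_span_subspace _).1.
move=> [/lin_spanP[I [f [c zE]]] /lin_spanP[I' [f' [c' zE']]]].
pose g k := match k with inl i => (k1, f i) | inr i => (k2, f' i) end.
pose d k := match k with inl i => c i | inr i => - c' i end.
have d0 : \sum_k d k *: x (g k) = 0.
  rewrite big_sumType /=; under [X in _ + X]eq_bigr do rewrite scaleNr.
  by rewrite sumrN -zE -zE' subrr.
rewrite zE; apply: coef_at_eq0_sumZ => -[k j].
have := x_free _ _ _ d0 (k, j); rewrite /coef_at big_sumType /=.
have [->|kk1] := pselect (k = k1); last first.
  by move=> _; rewrite big_pred0 // => i; apply/asboolP => -[/esym].
rewrite [X in _ + X]big_pred0 ?addr0 // => i.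
by apply/asboolP => -[k21 _]; exact: k12.
Qed.

End LinearCombinations.

Section Density.
Variables (K : numFieldType) (X : topologicalLmodType K).

Lemma lin_subspace_closure (Y : set X) :
  lin_subspace Y -> lin_subspace (closure Y).
Proof.
move=> [Y0 [YD YZ]]; split; [exact: subset_closure|split].
- move=> u v Yu Yv O Ouv.
  have [[U V] /= [Uu Vv] UV] := @add_continuous X (u, v) O Ouv.
  have [u' [Yu' Uu']] := Yu U Uu; have [v' [Yv' Vv']] := Yv V Vv.
  by exists (u' + v'); split; [exact: YD|exact: (UV (u', v'))].
- move=> a u Yu O Oau.
  have [[A U] /= [Aa Uu] AU] := @scale_continuous K X (a, u) O Oau.
  have [u' [Yu' Uu']] := Yu U Uu.
  exists (a *: u'); split; first exact: YZ.
  by apply: (AU (_, _)); split => //; exact: nbhs_singleton.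
Qed.

Lemma dense_lin_span_approx A B J (Bs : A -> set X) (b : B -> X) (x : J -> X) :
  (forall (U : set X) p, open U -> U p -> exists m, Bs m p /\ Bs m `<=` U) ->
  (forall a m, Bs m (b a) -> exists j, Bs m (x j)) ->
  dense (lin_span b) -> dense (lin_span x).
Proof.
move=> Bs_base x_near b_dense.
have b_cl : lin_span b `<=` closure (lin_span x).
  apply: lin_span_sub => [|a U /nbhs_interior/nbhs_singleton Ua].
    exact/lin_subspace_closure/lin_span_subspace.
  have [m [Bab BU]] := Bs_base _ _ (@open_interior _ U) Ua.
  have [j Bxj] := x_near _ _ Bab.
  by exists (x j); split; [exact: lin_span_mem|exact: interior_subset (BU _ Bxj)].
move=> O O0 O_open; have [y [Oy /b_cl y_cl]] := b_dense O O0 O_open.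
by rewrite setIC; apply: y_cl; exact: open_nbhs_nbhs.
Qed.

Lemma nonzero_perturbation (u v : X) (O : set X) :
  nbhs u O -> exists2 t : K, t != 0 & O (u + t *: v).
Proof.
move=> Ou.
have := @add_continuous X (u, 0) O; rewrite /= addr0.
move=> /(_ Ou)[[U V] /= [Uu V0] UV].
have := @scale_continuous K X (0, v) V; rewrite /= scale0r.
move=> /(_ V0)[[Z W] /= [Z0 Wv] ZW].
have /filter_ex[t [t0 Zt]] : \forall t \near (0 : K^o)^', t != 0 /\ Z t.
  exact: filterS2 (fun t a b => conj a b) (nbhs_dnbhs_neq 0) (nbhs_dnbhs Z0).
exists t => //; apply: (UV (u, t *: v)); split; first exact: nbhs_singleton.
by apply: (ZW (t, v)); split => //; exact: nbhs_singleton.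
Qed.

Lemma exists_perturbations J (u v : J -> X) (O : J -> set X) :
  (forall j, open (O j)) ->
  exists t : J -> K,
    (forall j, t j != 0) /\ (forall j, O j (u j) -> O j (u j + t j *: v j)).
Proof.
move=> O_open; suff /choice[t tP] : forall j, exists t : K,
    t != 0 /\ (O j (u j) -> O j (u j + t *: v j)).
  by exists t; split=> j; case: (tP j).
move=> j; have [Ouj|nOuj] := pselect (O j (u j)); last first.
  by exists 1; split; [exact: oner_neq0|move=> /nOuj].
have [t t0 Ot] :=
  nonzero_perturbation (v j) (open_nbhs_nbhs (conj (O_open j) Ouj)).
by exists t.
Qed.

Lemma dense_perturbed_family A (Bs : A -> set X) (b : A -> X) (i : nat -> A)
    (h : A * A -> A) :
  injective i -> injective h -> (forall m, open (Bs m)) ->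
  (forall (U : set X) p, open U -> U p -> exists m, Bs m p /\ Bs m `<=` U) ->
  lin_indep b -> dense (lin_span b) ->
  exists x : A * A -> X, [/\ lin_indep x,
    forall k, dense (lin_span (fun j => x (k, j))) & forall p, lin_span b (x p)].
Proof.
move=> i_inj h_inj Bs_open Bs_base b_indep b_dense.
have [hV hK] := inj_cancel (i 0%N, i 0%N) h_inj.
have [iV iK] := inj_cancel 0%N i_inj.
(* The index h (a, m) codes the basis vector b a and the basic open set Bs m,
   and h (i n, _) has level rk = n; so psi is injective and raises the level
   of the basis index src j. *)
pose src j := (hV j).1; pose nbd j := (hV j).2; pose rk a := iV (hV a).1.
pose psi p := h (i (rk (src p.2)).+1, h p).
have psi_inj : injective psi by move=> p q /h_inj[_ /h_inj].
have rk_psi p : (rk (src p.2) < rk (psi p))%N by rewrite /rk /psi hK iK.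
have [t [t_neq0 t_near]] := exists_perturbations (fun p => b (src p.2))
  (fun p => b (psi p)) (fun p => Bs_open (nbd p.2)).
exists (fun p => b (src p.2) + t p *: b (psi p)); split.
- exact: (lin_indep_perturbed (src := fun p => src p.2) b_indep psi_inj
    t_neq0 rk_psi).
- move=> k; apply: (dense_lin_span_approx (b := b) Bs_base) b_dense => a m Bab.
  exists (h (a, m)); have := t_near (k, h (a, m)).
  by rewrite /src /nbd /= hK; apply.
- move=> p; have [_ [span_add span_scale]] := lin_span_subspace b.
  by apply: span_add; [|apply: span_scale]; exact: lin_span_mem.
Qed.

End Density.

Theorem theorem3p2 (K : numFieldType) (X : topologicalLmodType K)
  (M : set X) (A : Type) :
  infinite_card A -> weight_le X A ->
  (dense_lineable A M <-> inf_dense_lineable A A M).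
Proof.
move=> [i i_inj] [Bs [Bs_open Bs_base]]; split; last first.
  by move=> [Y [/(_ (i 0%N)) YM _]]; exists (Y (i 0%N)).
move=> [Y [Y_sub [Y_dense [[b [b_indep bY]] YM]]]].
have [h h_inj] := infinite_square_inj i_inj.
have b_dense : dense (lin_span b) by rewrite bY.
have [x [x_indep x_dense x_span]] :=
  dense_perturbed_family i_inj h_inj Bs_open Bs_base b_indep b_dense.
exists (fun k => lin_span (fun j => x (k, j))); split=> [k|k1 k2]; last first.
  exact: lin_span_disjoint.
split; [exact: lin_span_subspace|split; [exact: x_dense|split]].
- exists (fun j => x (k, j)); split=> //.
  by apply: (lin_indep_comp (e := pair k) x_indep) => j j' [].
- apply: (subset_trans _ YM); rewrite -bY.
  by apply: lin_span_sub => [|j]; [exact: lin_span_subspace|exact: x_span].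
Qed.
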